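(* Let $\varepsilon>0$, $\Omega\subset\mathbb{R}^2$ bounded open, $u\in\mathcal{SF}_\varepsilon(\Omega)$, $R\in\mathcal{R}_\varepsilon(u)$, and let $S_R(u)\subseteq\mathbb{S}^2$ be an admissible interpolation surface for $u$ in $R$. Then $S_R(u)$ is either a semi great-circle, or an arc of geodesic, or a geodesic triangle, or the union of two adjacent geodesic triangles, or a hemisphere.
   Context: $\mathcal{L}=\{ae_1+b\hat e_2:a,b\in\mathbb{Z}\}$ with $e_1=(1,0)$, $\hat e_2=\frac12(1,\sqrt3)$, $\mathcal{L}_\varepsilon=\varepsilon\mathcal{L}$, $\mathcal{L}_\varepsilon(R)=\mathcal{L}_\varepsilon\cap R$; $\mathcal{T}_\varepsilon$ is the set of closed triangles with vertices in $\mathcal{L}_\varepsilon$ pairwise at distance $\varepsilon$; $\mathcal{E}_\varepsilon$ the set of segments $[i,j]$, $i,j\in\mathcal{L}_\varepsilon$, $|i-j|=\varepsilon$. $n=(0,0,1)$; $\mathcal{SF}_\varepsilon(\Omega)$ is the set of $u:\mathcal{L}_\varepsilon\to\mathbb{S}^2$ with $u=n$ on $\mathcal{L}_\varepsilon\setminus\Omega$. $\mathcal{N}_\varepsilon(u)=\{[i,j]\in\mathcal{E}_\varepsilon:u(i)=-u(j)\}$. Two triangles of $\mathcal{T}_\varepsilon$ are neighbours if their intersection is an edge in $\mathcal{N}_\varepsilon(u)$, connected if joined by a finite chain of neighbours; $\mathcal{R}_\varepsilon(u)$ is the set of unions of pairwise connected triangles maximal under inclusion. $\mathrm{cone}_R(u)=\{\sum_{w\in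 u(\mathcal{L}_\varepsilon(R))}\lambda_ww:\lambda_w\ge0\}$. $S_R(u)$ is an admissible interpolation surface for $u$ in $R$ if: when $\mathrm{cone}_R(u)$ is not a linear subspace of $\mathbb{R}^3$, $S_R(u)=\{v/|v|: v=\sum_w\lambda_ww,\ \lambda_w\ge0,\ \sum_w\lambda_w>0\}$; when it is a linear subspace, $S_R(u)=\{v/|v|:v=\sum_w\lambda_ww+\tau h,\ \lambda_w,\tau\ge0,\ \sum_w\lambda_w+\tau>0\}$ for some $h\in\mathbb{S}^2$ orthogonal to $\mathrm{cone}_R(u)$ (sums over $w\in u(\mathcal{L}_\varepsilon(R))$). A geodesic triangle with linearly independent vertices $p_1,p_2,p_3\in\mathbb{S}^2$ is $\{\sum\lambda_ip_i/|\sum\lambda_ip_i|:\lambda_i>0\}$; a hemisphere is a set $\{q\in\mathbb{S}^2:q\cdot h>0\}$ (possibly with its boundary great circle). *)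

From Stdlib Require Import Reals Lra List Relations.
Open Scope R_scope.

Definition R2 : Type := (R * R)%type.
Definition R3 : Type := (R * R * R)%type.

Definition add2 (p q : R2) : R2 := (fst p + fst q, snd p + snd q).
Definition scal2 (a : R) (p : R2) : R2 := (a * fst p, a * snd p).
Definition dist2 (p q : R2) : R :=
  sqrt ((fst p - fst q) ^ 2 + (snd p - snd q) ^ 2).

Definition mk3 (a b c : R) : R3 := (a, b, c).
Definition c1 (v : R3) : R := fst (fst v).
Definition c2 (v : R3) : R := snd (fst v).
Definition c3 (v : R3) : R := snd v.
Definition add3 (v w : R3) : R3 := mk3 (c1 v + c1 w) (c2 v + c2 w) (c3 v + c3 w).
Definition scal3 (a : R) (v : R3) : R3 := mk3 (a * c1 v) (a * c2 v) (a * c3 v).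
Definition opp3 (v : R3) : R3 := scal3 (-1) v.
Definition zero3 : R3 := mk3 0 0 0.
Definition dot3 (v w : R3) : R := c1 v * c1 w + c2 v * c2 w + c3 v * c3 w.
Definition norm3 (v : R3) : R := sqrt (dot3 v v).
Definition normalize (v : R3) : R3 := scal3 (/ norm3 v) v.
Definition on_S2 (v : R3) : Prop := norm3 v = 1.
Definition npole : R3 := mk3 0 0 1.

Definition e1 : R2 := (1, 0).
Definition e2hat : R2 := (1 / 2, sqrt 3 / 2).
Definition in_lattice (eps : R) (x : R2) : Prop :=
  exists a b : Z, x = scal2 eps (add2 (scal2 (IZR a) e1) (scal2 (IZR b) e2hat)).

Definition open2 (O : R2 -> Prop) : Prop :=
  forall x, O x -> exists r, 0 < r /\ forall y, dist2 x y < r -> O y.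
Definition bounded2 (O : R2 -> Prop) : Prop :=
  exists M, forall x, O x -> dist2 x (0, 0) <= M.

(* u in SF_eps(Omega): u : L_eps -> S^2 with u = n on L_eps \ Omega.
   (u is given as a map on R^2; only its values on L_eps matter.) *)
Definition SF (eps : R) (Omega : R2 -> Prop) (u : R2 -> R3) : Prop :=
  (forall i, in_lattice eps i -> on_S2 (u i)) /\
  (forall i, in_lattice eps i -> ~ Omega i -> u i = npole).

Definition conv3 (a b c : R2) (x : R2) : Prop :=
  exists al be ga, 0 <= al /\ 0 <= be /\ 0 <= ga /\ al + be + ga = 1 /\
    x = add2 (scal2 al a) (add2 (scal2 be b) (scal2 ga c)).
Definition segm (i j : R2) (x : R2) : Prop :=
  exists t, 0 <= t <= 1 /\ x = add2 (scal2 (1 - t) i) (scal2 t j).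

Definition in_T (eps : R) (T : R2 -> Prop) : Prop :=
  exists a b c, in_lattice eps a /\ in_lattice eps b /\ in_lattice eps c /\
    dist2 a b = eps /\ dist2 b c = eps /\ dist2 a c = eps /\
    forall x, T x <-> conv3 a b c x.

Definition in_N (eps : R) (u : R2 -> R3) (E : R2 -> Prop) : Prop :=
  exists i j, in_lattice eps i /\ in_lattice eps j /\ dist2 i j = eps /\
    u i = opp3 (u j) /\ forall x, E x <-> segm i j x.

Definition neighbours (eps : R) (u : R2 -> R3) (T T' : R2 -> Prop) : Prop :=
  in_T eps T /\ in_T eps T' /\ in_N eps u (fun x => T x /\ T' x).

Definition connected_tri (eps : R) (u : R2 -> R3) (T T' : R2 -> Prop) : Prop :=
  clos_refl_trans (R2 -> Prop) (neighbours eps u) T T'.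

Definition union_conn (eps : R) (u : R2 -> R3) (Reg : R2 -> Prop) : Prop :=
  exists F : (R2 -> Prop) -> Prop,
    (forall T, F T -> in_T eps T) /\
    (forall T T', F T -> F T' -> connected_tri eps u T T') /\
    (forall x, Reg x <-> exists T, F T /\ T x).

Definition is_region (eps : R) (u : R2 -> R3) (Reg : R2 -> Prop) : Prop :=
  union_conn eps u Reg /\
  forall Reg', union_conn eps u Reg' -> (forall x, Reg x -> Reg' x) ->
    forall x, Reg' x -> Reg x.

Definition values (eps : R) (u : R2 -> R3) (Reg : R2 -> Prop) (w : R3) : Prop :=
  exists i, in_lattice eps i /\ Reg i /\ u i = w.

Fixpoint lincomb (l : list (R * R3)) : R3 :=
  match l with
  | nil => zero3
  | (a, w) :: l' => add3 (scal3 a w) (lincomb l')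
  end.
Fixpoint coefsum (l : list (R * R3)) : R :=
  match l with
  | nil => 0
  | (a, _) :: l' => a + coefsum l'
  end.
Definition nonneg_on (W : R3 -> Prop) (l : list (R * R3)) : Prop :=
  Forall (fun p => 0 <= fst p /\ W (snd p)) l.

Definition cone (W : R3 -> Prop) (v : R3) : Prop :=
  exists l, nonneg_on W l /\ v = lincomb l.

Definition lin_subspace (C : R3 -> Prop) : Prop :=
  C zero3 /\ (forall v w, C v -> C w -> C (add3 v w)) /\
  (forall a v, C v -> C (scal3 a v)).

(* S is an admissible interpolation surface for u in Reg.
   Only nonzero v are normalised (v/|v| is meaningless for v = 0). *)
Definition admissible_surface (eps : R) (u : R2 -> R3) (Reg : R2 -> Prop)
    (S : R3 -> Prop) : Prop :=
  let W := values eps u Reg in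
  (~ lin_subspace (cone W) /\
    forall q, S q <-> exists l, nonneg_on W l /\ 0 < coefsum l /\
                       lincomb l <> zero3 /\ q = normalize (lincomb l))
  \/
  (lin_subspace (cone W) /\
    exists h, on_S2 h /\ (forall v, cone W v -> dot3 h v = 0) /\
    forall q, S q <-> exists l tau, nonneg_on W l /\ 0 <= tau /\
                       0 < coefsum l + tau /\
                       add3 (lincomb l) (scal3 tau h) <> zero3 /\
                       q = normalize (add3 (lincomb l) (scal3 tau h))).

Definition lin_indep3 (p1 p2 p3 : R3) : Prop :=
  forall a b c, add3 (scal3 a p1) (add3 (scal3 b p2) (scal3 c p3)) = zero3 ->
    a = 0 /\ b = 0 /\ c = 0.

Definition semi_great_circle (S : R3 -> Prop) : Prop :=
  exists p q, on_S2 p /\ on_S2 q /\ dot3 p q = 0 /\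
    forall x, S x <-> exists t, 0 <= t <= PI /\
                 x = add3 (scal3 (cos t) p) (scal3 (sin t) q).

(* closed (minimal) arc of geodesic between p and q, q <> -p; p = q allowed
   (degenerate arc = a point) *)
Definition geodesic_arc (S : R3 -> Prop) : Prop :=
  exists p q, on_S2 p /\ on_S2 q /\ q <> opp3 p /\
    forall x, S x <-> exists a b, 0 <= a /\ 0 <= b /\ 0 < a + b /\
                 x = normalize (add3 (scal3 a p) (scal3 b q)).

Definition gtri (p1 p2 p3 : R3) (x : R3) : Prop :=
  exists a b c, 0 <= a /\ 0 <= b /\ 0 <= c /\ 0 < a + b + c /\
    x = normalize (add3 (scal3 a p1) (add3 (scal3 b p2) (scal3 c p3))).

Definition geodesic_triangle (S : R3 -> Prop) : Prop :=
  exists p1 p2 p3, on_S2 p1 /\ on_S2 p2 /\ on_S2 p3 /\ lin_indep3 p1 p2 p3 /\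
    forall x, S x <-> gtri p1 p2 p3 x.

Definition det3 (p q r : R3) : R :=
  c1 p * (c2 q * c3 r - c3 q * c2 r)
  - c2 p * (c1 q * c3 r - c3 q * c1 r)
  + c3 p * (c1 q * c2 r - c2 q * c1 r).

(* union of two geodesic triangles sharing the edge [p1,p2], lying on
   opposite sides of the great circle through p1, p2 *)
Definition two_adjacent_triangles (S : R3 -> Prop) : Prop :=
  exists p1 p2 p3 p4, on_S2 p1 /\ on_S2 p2 /\ on_S2 p3 /\ on_S2 p4 /\
    lin_indep3 p1 p2 p3 /\ lin_indep3 p1 p2 p4 /\
    det3 p1 p2 p3 * det3 p1 p2 p4 < 0 /\
    forall x, S x <-> gtri p1 p2 p3 x \/ gtri p1 p2 p4 x.

Definition hemisphere (S : R3 -> Prop) : Prop :=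
  exists h, on_S2 h /\
    ((forall x, S x <-> on_S2 x /\ 0 < dot3 x h) \/
     (forall x, S x <-> on_S2 x /\ 0 <= dot3 x h)).

(* The admissible surface depends only on the convex cone C spanned by the values of u on the
   region: it is the radial projection of C, or of C + R_+ h when C is a linear subspace orthogonal
   to h.  A region made of a single triangle contains three lattice points, so C is spanned by three
   unit vectors.  A region made of several triangles has an edge [i,j] with u(i) = -u(j), so C
   contains a line; every such edge meets Omega, hence the region is bounded and C is finitely
   generated.  Adding the generators one at a time shows that in both cases C is a ray, a sector, a
   simplicial cone, or a cone containing a line (line, half-plane, wedge, half-space, plane, space),
   and the radial projections of these cones are exactly the listed spherical shapes. *)

From Stdlib Require Import Reals Lra Psatz Lia ZArith List Relations.
From Stdlib Require Import Classical FunctionalExtensionality PropExtensionality.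
Import ListNotations.
Open Scope R_scope.

Definition cross3 (p q : R3) : R3 :=
  mk3 (c2 p * c3 q - c3 p * c2 q) (c3 p * c1 q - c1 p * c3 q) (c1 p * c2 q - c2 p * c1 q).
Definition lc2 (a : R) (p : R3) (b : R) (q : R3) : R3 := add3 (scal3 a p) (scal3 b q).
Definition lc3 (a : R) (p : R3) (b : R) (q : R3) (c : R) (r : R3) : R3 :=
  add3 (scal3 a p) (add3 (scal3 b q) (scal3 c r)).

Ltac vsimpl :=
  repeat match goal with v : R3 |- _ => destruct v as [[? ?] ?] end;
  unfold lc2, lc3, opp3, cross3, det3, add3, scal3, zero3, dot3, mk3, c1, c2, c3 in *;
  simpl in *.

Lemma vec3_ext (v w : R3) : c1 v = c1 w -> c2 v = c2 w -> c3 v = c3 w -> v = w.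
Proof.
  destruct v as [[a b] c], w as [[d e] f]; unfold c1, c2, c3; simpl; intros; subst; reflexivity.
Qed.

Ltac vring := apply vec3_ext; vsimpl; ring.

Lemma vec3_coords (v w : R3) : v = w -> c1 v = c1 w /\ c2 v = c2 w /\ c3 v = c3 w.
Proof. intros ->; auto. Qed.

Lemma dot3_ge0 (v : R3) : 0 <= dot3 v v.
Proof. vsimpl; nra. Qed.

Lemma dot3_pos (v : R3) : v <> zero3 -> 0 < dot3 v v.
Proof.
  destruct v as [[x y] z]; intros Hv; unfold dot3, c1, c2, c3; simpl.
  destruct (Req_dec x 0), (Req_dec y 0), (Req_dec z 0); subst; try (exfalso; apply Hv; reflexivity); nra.
Qed.

Lemma norm3_pos (v : R3) : v <> zero3 -> 0 < norm3 v.
Proof. intros; apply sqrt_lt_R0, dot3_pos; auto. Qed.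

Lemma norm3_sqr (v : R3) : norm3 v * norm3 v = dot3 v v.
Proof. apply sqrt_sqrt, dot3_ge0. Qed.

Lemma on_S2_dot (v : R3) : on_S2 v <-> dot3 v v = 1.
Proof.
  unfold on_S2; split; intros H.
  - rewrite <- norm3_sqr, H; ring.
  - unfold norm3; rewrite H; apply sqrt_1.
Qed.

Lemma on_S2_neq0 (v : R3) : on_S2 v -> v <> zero3.
Proof. intros H ->; apply on_S2_dot in H; vsimpl; lra. Qed.

Lemma on_S2_opp (v : R3) : on_S2 v -> on_S2 (opp3 v).
Proof. rewrite !on_S2_dot; intros H; rewrite <- H; vsimpl; ring. Qed.

Lemma on_S2_neq_opp (v : R3) : on_S2 v -> v <> opp3 v.
Proof.
  intros H E; apply on_S2_dot in H; apply vec3_coords in E; vsimpl.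
  destruct E as (E1 & E2 & E3); nra.
Qed.

Lemma dot3_scal_l (a : R) (v w : R3) : dot3 (scal3 a v) w = a * dot3 v w.
Proof. vsimpl; ring. Qed.

Lemma dot3_scal_r (a : R) (v w : R3) : dot3 v (scal3 a w) = a * dot3 v w.
Proof. vsimpl; ring. Qed.

Lemma dot3_add_r (u v w : R3) : dot3 u (add3 v w) = dot3 u v + dot3 u w.
Proof. vsimpl; ring. Qed.

Lemma dot3_comm (v w : R3) : dot3 v w = dot3 w v.
Proof. vsimpl; ring. Qed.

Lemma dot3_normalize_r (h v : R3) : dot3 h (normalize v) = dot3 h v / norm3 v.
Proof. unfold normalize; rewrite dot3_scal_r; unfold Rdiv; ring. Qed.

Lemma normalize_on_S2 (v : R3) : v <> zero3 -> on_S2 (normalize v).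
Proof.
  intros Hv; apply on_S2_dot; unfold normalize.
  pose proof (norm3_pos v Hv); pose proof (norm3_sqr v).
  transitivity (/ norm3 v * / norm3 v * dot3 v v); [vsimpl; ring|].
  rewrite <- H0; field; lra.
Qed.

Lemma normalize_id (v : R3) : on_S2 v -> normalize v = v.
Proof. unfold normalize, on_S2; intros ->; rewrite Rinv_1; vring. Qed.

Lemma norm3_scal (k : R) (v : R3) : 0 <= k -> norm3 (scal3 k v) = k * norm3 v.
Proof.
  intros Hk; unfold norm3.
  replace (dot3 (scal3 k v) (scal3 k v)) with ((k * k) * dot3 v v) by (vsimpl; ring).
  rewrite sqrt_mult, sqrt_square; auto; [nra|apply dot3_ge0].
Qed.

Lemma normalize_scal (k : R) (v : R3) : 0 < k -> normalize (scal3 k v) = normalize v.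
Proof.
  intros Hk; destruct (classic (v = zero3)) as [->|Hv]; unfold normalize.
  - vring.
  - rewrite norm3_scal by lra; pose proof (norm3_pos v Hv).
    apply vec3_ext; vsimpl; field; lra.
Qed.

Lemma det3_lc3_1 p q r a b c : det3 (lc3 a p b q c r) q r = a * det3 p q r.
Proof. vsimpl; ring. Qed.
Lemma det3_lc3_2 p q r a b c : det3 p (lc3 a p b q c r) r = b * det3 p q r.
Proof. vsimpl; ring. Qed.
Lemma det3_lc3_3 p q r a b c : det3 p q (lc3 a p b q c r) = c * det3 p q r.
Proof. vsimpl; ring. Qed.

Lemma det3_swap23 p q r : det3 p q r = - det3 p r q.
Proof. vsimpl; ring. Qed.

Lemma det3_cross (p q v : R3) : det3 p q v = dot3 (cross3 p q) v.
Proof. vsimpl; ring. Qed.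

Lemma det3_cross_neq0 (p q : R3) : cross3 p q <> zero3 -> det3 p q (cross3 p q) <> 0.
Proof. intros H; rewrite det3_cross; apply Rgt_not_eq, dot3_pos, H. Qed.

Lemma lc3_coords (p q r v : R3) : det3 p q r <> 0 -> exists a b c, v = lc3 a p b q c r.
Proof.
  intros H; exists (det3 v q r / det3 p q r), (det3 p v r / det3 p q r), (det3 p q v / det3 p q r).
  apply vec3_ext; vsimpl; field; exact H.
Qed.

Lemma lc3_eq0 (p q r : R3) a b c :
  det3 p q r <> 0 -> lc3 a p b q c r = zero3 -> a = 0 /\ b = 0 /\ c = 0.
Proof.
  intros H E.
  pose proof (det3_lc3_1 p q r a b c); pose proof (det3_lc3_2 p q r a b c);
  pose proof (det3_lc3_3 p q r a b c); rewrite E in *.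
  repeat split; apply (Rmult_eq_reg_r (det3 p q r)); auto; vsimpl; lra.
Qed.

Lemma lc2_eq0 (p q : R3) a b : cross3 p q <> zero3 -> lc2 a p b q = zero3 -> a = 0 /\ b = 0.
Proof.
  intros H E.
  destruct (lc3_eq0 p q (cross3 p q) a b 0 (det3_cross_neq0 p q H)) as (? & ? & _); auto.
  rewrite <- E; vring.
Qed.

Lemma lin_indep3_det (p q r : R3) : det3 p q r <> 0 -> lin_indep3 p q r.
Proof. intros H a b c; apply lc3_eq0, H. Qed.

Lemma cross3_parallel_units (q w : R3) :
  on_S2 q -> on_S2 w -> cross3 q w = zero3 -> w = q \/ w = opp3 q.
Proof.
  intros Hq Hw Hc; apply on_S2_dot in Hq; apply on_S2_dot in Hw.
  assert (Ew : w = scal3 (dot3 q w) q).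
  { assert (E : scal3 (dot3 q q) w = add3 (scal3 (dot3 q w) q) (cross3 (cross3 q w) q)) by vring.
    rewrite Hq, Hc in E; apply vec3_coords in E; apply vec3_ext; vsimpl; lra. }
  assert (K : dot3 q w * dot3 q w = 1).
  { assert (Hs : forall k, dot3 (scal3 k q) (scal3 k q) = k * k * dot3 q q) by (intros; vsimpl; ring).
    rewrite Ew, Hs, Hq in Hw; lra. }
  destruct (Rle_or_lt 0 (dot3 q w)); [left|right]; rewrite Ew.
  - replace (dot3 q w) with 1 by nra; vring.
  - replace (dot3 q w) with (-1) by nra; reflexivity.
Qed.

Lemma unit_neg_multiple (q w : R3) k : on_S2 q -> on_S2 w -> k < 0 -> w = scal3 k q -> w = opp3 q.
Proof.
  intros Hq Hw Hk ->; apply on_S2_dot in Hq; apply on_S2_dot in Hw.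
  replace (dot3 (scal3 k q) (scal3 k q)) with (k * k * dot3 q q) in Hw by (vsimpl; ring).
  replace k with (-1) by nra; reflexivity.
Qed.

Lemma cross3_lc2_l (q1 q2 : R3) al be : cross3 q1 (lc2 al q1 be q2) = scal3 be (cross3 q1 q2).
Proof. vring. Qed.

Lemma scal3_neq0 (k : R) (v : R3) : k <> 0 -> v <> zero3 -> scal3 k v <> zero3.
Proof.
  intros Hk Hv E; apply Hv.
  replace v with (scal3 (/ k) (scal3 k v)) by (apply vec3_ext; vsimpl; field; auto).
  rewrite E; vring.
Qed.

Lemma units_cross3_neq0 (q w : R3) :
  on_S2 q -> on_S2 w -> w <> q -> w <> opp3 q -> cross3 q w <> zero3.
Proof. intros Hq Hw N1 N2 Hc; destruct (cross3_parallel_units q w Hq Hw Hc); auto. Qed.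

(** ** Cones *)

Lemma set3_ext (A B : R3 -> Prop) : (forall v, A v <-> B v) -> A = B.
Proof. intros H; apply functional_extensionality; intros v; apply propositional_extensionality, H. Qed.

Definition extend (C : R3 -> Prop) (w v : R3) : Prop :=
  exists c a, C c /\ 0 <= a /\ v = add3 c (scal3 a w).

Definition cone_list (L : list R3) : R3 -> Prop := cone (fun w => In w L).

Definition zero_cone (v : R3) : Prop := v = zero3.
Definition ray (q v : R3) : Prop := exists a, 0 <= a /\ v = scal3 a q.
Definition sector (q1 q2 v : R3) : Prop := exists a b, 0 <= a /\ 0 <= b /\ v = lc2 a q1 b q2.
Definition simplex (q1 q2 q3 v : R3) : Prop :=
  exists a b c, 0 <= a /\ 0 <= b /\ 0 <= c /\ v = lc3 a q1 b q2 c q3.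
Definition line (p v : R3) : Prop := exists c, v = scal3 c p.
Definition half_plane (p q v : R3) : Prop := exists c b, 0 <= b /\ v = lc2 c p b q.
Definition plane (p q v : R3) : Prop := exists a b, v = lc2 a p b q.
Definition wedge (p q1 q2 v : R3) : Prop := exists c a b, 0 <= a /\ 0 <= b /\ v = lc3 c p a q1 b q2.
Definition half_space (n v : R3) : Prop := 0 <= dot3 n v.
Definition whole_space (v : R3) : Prop := True.

Lemma nonneg_on_mono (W W' : R3 -> Prop) l :
  (forall w, W w -> W' w) -> nonneg_on W l -> nonneg_on W' l.
Proof. intros H; apply Forall_impl; intros [a w] [Ha Hw]; auto. Qed.

Lemma cone_list_nil : cone_list [] = zero_cone.
Proof.
  apply set3_ext; intros v; split.
  - intros [[|[a w] l] [N ->]]; [reflexivity|].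
    inversion N as [|? ? [_ []]].
  - intros ->; exists []; split; [constructor|reflexivity].
Qed.

Lemma cone_list_cons (w : R3) L : cone_list (w :: L) = extend (cone_list L) w.
Proof.
  apply set3_ext; intros v; split.
  - intros [l [N ->]]; induction N as [|[a x] l [Ha Hx] N IH]; simpl in *.
    + exists zero3, 0; repeat split; [exists []; split; [constructor|reflexivity]|lra|vring].
    + destruct IH as (c & b & [l' [N' ->]] & Hb & ->).
      destruct Hx as [<-|Hx].
      * exists (lincomb l'), (a + b); repeat split; [exists l'; auto|lra|vring].
      * exists (lincomb ((a, x) :: l')), b; repeat split; [|auto|simpl; vring].
        exists ((a, x) :: l'); split; [constructor; auto|reflexivity].
  - intros (c & a & [l [N ->]] & Ha & ->).
    exists ((a, w) :: l); split; [constructor|simpl; vring].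
    + split; simpl; auto.
    + apply (nonneg_on_mono (fun x => In x L) (fun x => In x (w :: L))); simpl; auto.
Qed.

Definition radial (C : R3 -> Prop) (q : R3) : Prop := exists v, C v /\ v <> zero3 /\ q = normalize v.

Definition surface_of (C S : R3 -> Prop) : Prop :=
  (~ lin_subspace C /\ S = radial C) \/
  (lin_subspace C /\ exists h, on_S2 h /\ (forall v, C v -> dot3 h v = 0) /\ S = radial (extend C h)).

Lemma coefsum_ge0 (W : R3 -> Prop) l : nonneg_on W l -> 0 <= coefsum l.
Proof. induction 1 as [|[a x] l [Ha _] N IH]; simpl in *; lra. Qed.

Lemma coefsum_eq0 (W : R3 -> Prop) l : nonneg_on W l -> coefsum l = 0 -> lincomb l = zero3.
Proof.
  induction 1 as [|[a x] l [Ha _] N IH]; simpl in *; intros E; auto.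
  pose proof (coefsum_ge0 _ _ N); replace a with 0 in * by lra.
  rewrite IH by lra; vring.
Qed.

Lemma admissible_surface_of eps u Reg S :
  admissible_surface eps u Reg S -> surface_of (cone (values eps u Reg)) S.
Proof.
  set (W := values eps u Reg); intros [[Hns HS]|[Hs (h & Hh & Horth & HS)]]; [left|right];
    split; auto; [|exists h; repeat split; auto]; apply set3_ext; intros q; rewrite HS; split.
  - intros (l & N & _ & Hnz & ->); exists (lincomb l); repeat split; auto; exists l; auto.
  - intros (v & [l [N ->]] & Hnz & ->); exists l; repeat split; auto.
    destruct (Rle_lt_or_eq_dec _ _ (coefsum_ge0 _ _ N)) as [|E]; auto.
    exfalso; apply Hnz, (coefsum_eq0 W); auto.
  - intros (l & tau & N & Ht & _ & Hnz & ->).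
    exists (add3 (lincomb l) (scal3 tau h)); repeat split; auto.
    exists (lincomb l), tau; repeat split; auto; exists l; auto.
  - intros (v & (c & tau & [l [N ->]] & Ht & ->) & Hnz & ->); exists l, tau; repeat split; auto.
    destruct (Rle_lt_or_eq_dec _ _ (Rplus_le_le_0_compat _ _ (coefsum_ge0 _ _ N) Ht)) as [|E]; auto.
    exfalso; apply Hnz; rewrite (coefsum_eq0 W l N) by (pose proof (coefsum_ge0 _ _ N); lra).
    replace tau with 0 by (pose proof (coefsum_ge0 _ _ N); lra); vring.
Qed.

Definition spherical_shape (S : R3 -> Prop) : Prop :=
  semi_great_circle S \/ geodesic_arc S \/ geodesic_triangle S \/ two_adjacent_triangles S \/
  hemisphere S.

(** ** Radial projections *)

Lemma lc2_sum_pos (p q : R3) a b : 0 <= a -> 0 <= b -> lc2 a p b q <> zero3 -> 0 < a + b.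
Proof.
  intros Ha Hb Hnz; apply Rnot_le_lt; intros Hab; apply Hnz.
  replace a with 0 by lra; replace b with 0 by lra; vring.
Qed.

Lemma lc3_sum_pos (p q r : R3) a b c :
  0 <= a -> 0 <= b -> 0 <= c -> lc3 a p b q c r <> zero3 -> 0 < a + b + c.
Proof.
  intros Ha Hb Hc Hnz; apply Rnot_le_lt; intros Habc; apply Hnz.
  replace a with 0 by lra; replace b with 0 by lra; replace c with 0 by lra; vring.
Qed.

Lemma normalize_scal_unit (a : R) (q : R3) : 0 < a -> on_S2 q -> normalize (scal3 a q) = q.
Proof. intros; rewrite normalize_scal by auto; apply normalize_id; auto. Qed.

Lemma radial_ray (q : R3) : on_S2 q -> geodesic_arc (radial (ray q)).
Proof.
  intros Hq; exists q, q; split; [|split; [|split]]; auto using on_S2_neq_opp; intros x; split.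
  - intros (v & (a & Ha & ->) & Hnz & ->); exists 1, 0; repeat split; try lra.
    assert (0 < a) by (apply Rnot_le_lt; intros ?; apply Hnz; replace a with 0 by lra; vring).
    rewrite normalize_scal_unit by auto.
    replace (add3 (scal3 1 q) (scal3 0 q)) with q by vring; symmetry; apply normalize_id, Hq.
  - intros (a & b & Ha & Hb & Hab & ->); exists (scal3 (a + b) q).
    split; [exists (a + b); split; [lra|reflexivity]|split].
    + intros E; apply (on_S2_neq0 _ Hq); rewrite <- (normalize_scal_unit (a + b) q) by auto.
      rewrite E; unfold normalize; vring.
    + f_equal; vring.
Qed.

Lemma radial_sector (q1 q2 : R3) :
  on_S2 q1 -> on_S2 q2 -> cross3 q1 q2 <> zero3 -> geodesic_arc (radial (sector q1 q2)).
Proof.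
  intros H1 H2 Hc; exists q1, q2; split; [|split; [|split]]; auto.
  - intros E; apply Hc; rewrite E; vring.
  - intros x; split.
    + intros (v & (a & b & Ha & Hb & ->) & Hnz & ->); exists a, b; repeat split; auto.
      apply (lc2_sum_pos q1 q2); auto.
    + intros (a & b & Ha & Hb & Hab & ->); exists (lc2 a q1 b q2); repeat split.
      * exists a, b; auto.
      * intros E; apply lc2_eq0 in E; auto; lra.
Qed.

Lemma radial_simplex (q1 q2 q3 : R3) : on_S2 q1 -> on_S2 q2 -> on_S2 q3 -> det3 q1 q2 q3 <> 0 ->
  geodesic_triangle (radial (simplex q1 q2 q3)).
Proof.
  intros H1 H2 H3 Hd; exists q1, q2, q3; split; [|split; [|split; [|split]]]; auto using lin_indep3_det.
  intros x; split.
  - intros (v & (a & b & c & Ha & Hb & Hc & ->) & Hnz & ->); exists a, b, c; repeat split; auto.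
    apply (lc3_sum_pos q1 q2 q3); auto.
  - intros (a & b & c & Ha & Hb & Hc & Habc & ->); exists (lc3 a q1 b q2 c q3); repeat split.
    + exists a, b, c; auto.
    + intros E; apply lc3_eq0 in E; auto; lra.
Qed.

Lemma dot3_lc2_orthonormal (p h : R3) a b : on_S2 p -> on_S2 h -> dot3 p h = 0 ->
  dot3 (lc2 a p b h) (lc2 a p b h) = a * a + b * b.
Proof.
  rewrite !on_S2_dot; intros Hp Hh Hph.
  transitivity (a * a * dot3 p p + 2 * a * b * dot3 p h + b * b * dot3 h h); [vsimpl; ring|].
  rewrite Hp, Hh, Hph; ring.
Qed.

(* Write [v = c p + tau h] in polar form [|v| (cos t p + sin t h)]; [t] lies in [0, pi] as [tau >= 0]. *)
Lemma radial_half_plane_orth (p h : R3) : on_S2 p -> on_S2 h -> dot3 p h = 0 ->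
  semi_great_circle (radial (half_plane p h)).
Proof.
  intros Hp Hh Hph; exists p, h; split; [|split; [|split]]; auto; intros x; split.
  - intros (v & (c & tau & Ht & ->) & Hnz & ->).
    assert (HN : norm3 (lc2 c p tau h) = sqrt (c * c + tau * tau))
      by (unfold norm3; rewrite dot3_lc2_orthonormal; auto).
    pose proof (norm3_pos _ Hnz) as Np; rewrite HN in Np.
    set (N := sqrt (c * c + tau * tau)) in *.
    assert (NN : N * N = c * c + tau * tau) by (apply sqrt_sqrt; nra).
    assert (Hy : -1 <= c / N <= 1).
    { split; apply (Rmult_le_reg_r N); auto; unfold Rdiv; rewrite Rmult_assoc, Rinv_l by lra; nra. }
    exists (acos (c / N)); split; [apply acos_bound|].
    rewrite cos_acos, sin_acos by auto.
    replace (1 - (c / N)²) with ((tau / N) * (tau / N))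
      by (apply (Rmult_eq_reg_r (N * N)); [unfold Rsqr; field_simplify; lra|nra]).
    rewrite sqrt_square by (apply Rle_mult_inv_pos; lra).
    unfold normalize; rewrite HN; fold N; apply vec3_ext; vsimpl; field; lra.
  - intros (t & Ht & ->); exists (lc2 (cos t) p (sin t) h).
    assert (U : on_S2 (lc2 (cos t) p (sin t) h)).
    { apply on_S2_dot; rewrite dot3_lc2_orthonormal by auto.
      rewrite Rplus_comm; apply (sin2_cos2 t). }
    split; [|split; [apply on_S2_neq0, U|symmetry; apply normalize_id, U]].
    exists (cos t), (sin t); split; [apply sin_ge_0; lra|reflexivity].
Qed.

(* Gram-Schmidt: replace [q] by the unit vector [h] along its component orthogonal to [p]. *)
Lemma half_plane_orthonormal (p q : R3) : on_S2 p -> cross3 p q <> zero3 ->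
  exists h, on_S2 h /\ dot3 p h = 0 /\ half_plane p q = half_plane p h.
Proof.
  intros Hp Hc; pose proof Hp as Hp'; apply on_S2_dot in Hp'.
  set (k := dot3 p q); set (q' := add3 q (scal3 (- k) p)).
  assert (Hq' : q' <> zero3).
  { intros E; apply (lc2_eq0 p q (- k) 1) in Hc; [lra|rewrite <- E; unfold q'; vring]. }
  set (N := norm3 q'); assert (HN : 0 < N) by (apply norm3_pos; auto).
  exists (normalize q'); split; [apply normalize_on_S2; auto|split].
  - rewrite dot3_normalize_r; unfold q'; rewrite dot3_add_r, dot3_scal_r, Hp'; fold k.
    unfold Rdiv; ring.
  - assert (ID : forall c b, lc2 c p b q = lc2 (c + b * k) p (b * N) (normalize q')).
    { intros c b; unfold normalize; fold N; apply vec3_ext; unfold q' in *; vsimpl; field; lra. }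
    apply set3_ext; intros v; split.
    + intros (c & b & Hb & ->); exists (c + b * k), (b * N); split; [nra|apply ID].
    + intros (c & tau & Ht & ->); exists (c - tau / N * k), (tau / N); split.
      * apply Rle_mult_inv_pos; lra.
      * rewrite ID; f_equal; field; lra.
Qed.

Lemma radial_half_plane (p q : R3) : on_S2 p -> cross3 p q <> zero3 ->
  semi_great_circle (radial (half_plane p q)).
Proof.
  intros Hp Hc; destruct (half_plane_orthonormal p q Hp Hc) as (h & Hh & Hph & ->).
  apply radial_half_plane_orth; auto.
Qed.

(* The line through [p] cuts the wedge into the simplicial cones over [q1 q2 p] and [q1 q2 -p]. *)
Lemma radial_wedge (p q1 q2 : R3) : on_S2 p -> on_S2 q1 -> on_S2 q2 -> det3 p q1 q2 <> 0 ->
  two_adjacent_triangles (radial (wedge p q1 q2)).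
Proof.
  intros Hp H1 H2 Hd.
  assert (D1 : det3 q1 q2 p = det3 p q1 q2) by (vsimpl; ring).
  assert (D2 : det3 q1 q2 (opp3 p) = - det3 p q1 q2) by (vsimpl; ring).
  exists q1, q2, p, (opp3 p); do 4 (split; [auto using on_S2_opp|]); split; [|split; [|split]].
  - apply lin_indep3_det; rewrite D1; auto.
  - apply lin_indep3_det; rewrite D2; lra.
  - rewrite D1, D2; pose proof (Rsqr_pos_lt _ Hd); unfold Rsqr in *; lra.
  - intros x; split.
    + intros (v & (c & a & b & Ha & Hb & ->) & Hnz & ->).
      destruct (Rle_or_lt 0 c) as [Hc|Hc]; [left; exists a, b, c|right; exists a, b, (- c)].
      * replace (lc3 c p a q1 b q2) with (lc3 a q1 b q2 c p) in * by vring.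
        repeat split; auto; apply (lc3_sum_pos q1 q2 p); auto.
      * replace (lc3 c p a q1 b q2) with (lc3 a q1 b q2 (- c) (opp3 p)) in * by vring.
        repeat split; auto; try lra; apply (lc3_sum_pos q1 q2 (opp3 p)); auto; lra.
    + intros [(a & b & c & Ha & Hb & Hc & Habc & ->)|(a & b & c & Ha & Hb & Hc & Habc & ->)].
      * exists (lc3 a q1 b q2 c p); repeat split; [exists c, a, b; repeat split; auto; vring|].
        intros E; apply lc3_eq0 in E; [lra|rewrite D1; auto].
      * exists (lc3 a q1 b q2 c (opp3 p)); repeat split.
        { exists (- c), a, b; repeat split; auto; try lra; vring. }
        intros E; apply lc3_eq0 in E; [lra|rewrite D2; lra].
Qed.

Lemma radial_half_space (n : R3) : n <> zero3 -> hemisphere (radial (half_space n)).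
Proof.
  intros Hn; pose proof (norm3_pos n Hn) as Nn.
  exists (normalize n); split; [apply normalize_on_S2; auto|right]; intros x; split.
  - intros (v & Hv & Hnz & ->); split; [apply normalize_on_S2; auto|].
    rewrite dot3_normalize_r, dot3_comm, dot3_normalize_r; unfold half_space in Hv.
    pose proof (norm3_pos v Hnz); repeat apply Rle_mult_inv_pos; lra.
  - intros [Hx Hxn]; exists x; split; [|split; [apply on_S2_neq0, Hx|symmetry; apply normalize_id, Hx]].
    unfold half_space; rewrite dot3_normalize_r in Hxn; rewrite dot3_comm.
    apply Rmult_le_reg_r with (/ norm3 n); [apply Rinv_0_lt_compat; auto|lra].
Qed.

(** ** Classification of cones *)

Inductive nonpointed_cone : (R3 -> Prop) -> Prop :=
| nonpointed_line p : on_S2 p -> nonpointed_cone (line p)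
| nonpointed_half_plane p q :
    on_S2 p -> on_S2 q -> cross3 p q <> zero3 -> nonpointed_cone (half_plane p q)
| nonpointed_wedge p q1 q2 :
    on_S2 p -> on_S2 q1 -> on_S2 q2 -> det3 p q1 q2 <> 0 -> nonpointed_cone (wedge p q1 q2)
| nonpointed_half_space n : n <> zero3 -> nonpointed_cone (half_space n)
| nonpointed_plane p q : cross3 p q <> zero3 -> nonpointed_cone (plane p q)
| nonpointed_whole : nonpointed_cone whole_space.

Inductive classified_cone : (R3 -> Prop) -> Prop :=
| classified_zero : classified_cone zero_cone
| classified_ray q : on_S2 q -> classified_cone (ray q)
| classified_sector q1 q2 :
    on_S2 q1 -> on_S2 q2 -> cross3 q1 q2 <> zero3 -> classified_cone (sector q1 q2)
| classified_simplex q1 q2 q3 :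
    on_S2 q1 -> on_S2 q2 -> on_S2 q3 -> det3 q1 q2 q3 <> 0 -> classified_cone (simplex q1 q2 q3)
| classified_nonpointed C : nonpointed_cone C -> classified_cone C.

Lemma zero_cone_subspace : lin_subspace zero_cone.
Proof. unfold zero_cone; repeat split; intros; subst; vring. Qed.

Lemma line_subspace (p : R3) : lin_subspace (line p).
Proof.
  split; [exists 0; vring|split].
  - intros v w [a ->] [c ->]; exists (a + c); vring.
  - intros k v [a ->]; exists (k * a); vring.
Qed.

Lemma plane_subspace (p q : R3) : lin_subspace (plane p q).
Proof.
  split; [exists 0, 0; vring|split].
  - intros v w (a & b & ->) (c & d & ->); exists (a + c), (b + d); vring.
  - intros k v (a & b & ->); exists (k * a), (k * b); vring.
Qed.

Lemma whole_space_subspace : lin_subspace whole_space.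
Proof. repeat split. Qed.

Lemma not_subspace (C : R3 -> Prop) (v : R3) : C v -> ~ C (opp3 v) -> ~ lin_subspace C.
Proof. intros Hv Hnv (_ & _ & Hs); apply Hnv, Hs, Hv. Qed.

Lemma ray_not_subspace (q : R3) : on_S2 q -> ~ lin_subspace (ray q).
Proof.
  intros Hq; apply (not_subspace _ q); [exists 1; split; [lra|vring]|].
  intros (a & Ha & E); apply on_S2_dot in Hq; apply (f_equal (dot3 q)) in E.
  rewrite dot3_scal_r in E; replace (dot3 q (opp3 q)) with (- dot3 q q) in E by (vsimpl; ring); nra.
Qed.

Lemma sector_not_subspace (q1 q2 : R3) : cross3 q1 q2 <> zero3 -> ~ lin_subspace (sector q1 q2).
Proof.
  intros Hc; apply (not_subspace _ q1); [exists 1, 0; repeat split; [lra|lra|vring]|].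
  intros (a & b & Ha & Hb & E); apply (lc2_eq0 q1 q2 (1 + a) b) in Hc; [lra|].
  apply vec3_coords in E; apply vec3_ext; vsimpl; lra.
Qed.

Lemma simplex_not_subspace (q1 q2 q3 : R3) : det3 q1 q2 q3 <> 0 -> ~ lin_subspace (simplex q1 q2 q3).
Proof.
  intros Hd; apply (not_subspace _ q1); [exists 1, 0, 0; repeat split; try lra; vring|].
  intros (a & b & c & Ha & Hb & Hc & E); apply (lc3_eq0 q1 q2 q3 (1 + a) b c) in Hd; [lra|].
  apply vec3_coords in E; apply vec3_ext; vsimpl; lra.
Qed.

Lemma half_plane_not_subspace (p q : R3) : cross3 p q <> zero3 -> ~ lin_subspace (half_plane p q).
Proof.
  intros Hc; apply (not_subspace _ q); [exists 0, 1; split; [lra|vring]|].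
  intros (c & b & Hb & E); apply (lc2_eq0 p q c (1 + b)) in Hc; [lra|].
  apply vec3_coords in E; apply vec3_ext; vsimpl; lra.
Qed.

Lemma wedge_not_subspace (p q1 q2 : R3) : det3 p q1 q2 <> 0 -> ~ lin_subspace (wedge p q1 q2).
Proof.
  intros Hd; apply (not_subspace _ q1); [exists 0, 1, 0; repeat split; try lra; vring|].
  intros (c & a & b & Ha & Hb & E); apply (lc3_eq0 p q1 q2 c (1 + a) b) in Hd; [lra|].
  apply vec3_coords in E; apply vec3_ext; vsimpl; lra.
Qed.

Lemma half_space_not_subspace (n : R3) : n <> zero3 -> ~ lin_subspace (half_space n).
Proof.
  intros Hn; apply (not_subspace _ n); unfold half_space; pose proof (dot3_pos n Hn); [lra|].
  replace (dot3 n (opp3 n)) with (- dot3 n n) by (vsimpl; ring); lra.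
Qed.

Lemma extend_zero_cone (h : R3) : extend zero_cone h = ray h.
Proof.
  apply set3_ext; intros v; split.
  - intros (c & a & -> & Ha & ->); exists a; split; auto; vring.
  - intros (a & Ha & ->); exists zero3, a; repeat split; auto; vring.
Qed.

Lemma extend_line (p q : R3) : extend (line p) q = half_plane p q.
Proof.
  apply set3_ext; intros v; split.
  - intros (c & a & [k ->] & Ha & ->); exists k, a; split; auto.
  - intros (k & a & Ha & ->); exists (scal3 k p), a; repeat split; auto; exists k; reflexivity.
Qed.

Lemma plane_of_orth (p q h v : R3) : cross3 p q <> zero3 -> h <> zero3 ->
  dot3 h p = 0 -> dot3 h q = 0 -> dot3 h v = 0 -> plane p q v.
Proof.
  intros Hc Hh Hp Hq Hv; set (r := cross3 p q).
  pose proof (det3_cross_neq0 p q Hc) as Hd; fold r in Hd.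
  assert (Hr : dot3 h r <> 0).
  { destruct (lc3_coords p q r h Hd) as (a & b & c & Eh); intros E.
    assert (Ehh : dot3 h h = c * dot3 h r)
      by (rewrite Eh at 2; unfold lc3; rewrite !dot3_add_r, !dot3_scal_r, Hp, Hq; ring).
    apply dot3_pos in Hh; rewrite E in Ehh; lra. }
  destruct (lc3_coords p q r v Hd) as (a & b & c & ->).
  unfold lc3 in Hv; rewrite !dot3_add_r, !dot3_scal_r, Hp, Hq in Hv.
  replace c with 0 by nra; exists a, b; vring.
Qed.

Lemma extend_plane_orth (p q h : R3) : cross3 p q <> zero3 -> on_S2 h ->
  dot3 h p = 0 -> dot3 h q = 0 -> extend (plane p q) h = half_space h.
Proof.
  intros Hc Hh Hp Hq; pose proof Hh as Hh'; apply on_S2_dot in Hh'.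
  assert (Horth : forall c, plane p q c -> dot3 h c = 0).
  { intros c (a & b & ->); unfold lc2; rewrite dot3_add_r, !dot3_scal_r, Hp, Hq; ring. }
  apply set3_ext; intros v; unfold half_space; split.
  - intros (c & a & Hc' & Ha & ->); rewrite dot3_add_r, dot3_scal_r, Horth, Hh' by auto; lra.
  - intros Hv; exists (add3 v (scal3 (- dot3 h v) h)), (dot3 h v); repeat split; auto; [|vring].
    apply plane_of_orth with h; auto using on_S2_neq0.
    rewrite dot3_add_r, dot3_scal_r, Hh'; ring.
Qed.

Lemma radial_shape (C : R3 -> Prop) :
  classified_cone C -> ~ lin_subspace C -> spherical_shape (radial C).
Proof.
  unfold spherical_shape; intros [|q Hq|q1 q2 H1 H2 Hc|q1 q2 q3 H1 H2 H3 Hd|C' [p Hp|p q Hp Hq Hc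
    |p q1 q2 Hp H1 H2 Hd|n Hn|p q Hc|]] Hns;
    try (exfalso; apply Hns; auto using zero_cone_subspace, line_subspace, plane_subspace,
           whole_space_subspace; fail).
  - right; left; apply radial_ray; auto.
  - right; left; apply radial_sector; auto.
  - right; right; left; apply radial_simplex; auto.
  - left; apply radial_half_plane; auto.
  - right; right; right; left; apply radial_wedge; auto.
  - right; right; right; right; apply radial_half_space; auto.
Qed.

Lemma radial_extend_shape (C : R3 -> Prop) (h : R3) : classified_cone C -> lin_subspace C ->
  on_S2 h -> (forall v, C v -> dot3 h v = 0) -> spherical_shape (radial (extend C h)).
Proof.
  unfold spherical_shape; intros [|q Hq|q1 q2 H1 H2 Hc|q1 q2 q3 H1 H2 H3 Hd|C' [p Hp|p q Hp Hq Hc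
    |p q1 q2 Hp H1 H2 Hd|n Hn|p q Hc|]] Hs Hh Horth;
    try (exfalso; revert Hs; first [apply ray_not_subspace | apply sector_not_subspace
      | apply simplex_not_subspace | apply half_plane_not_subspace | apply wedge_not_subspace
      | apply half_space_not_subspace]; auto; fail).
  - right; left; rewrite extend_zero_cone; apply radial_ray, Hh.
  - left; rewrite extend_line; apply radial_half_plane_orth; auto.
    rewrite dot3_comm; apply Horth; exists 1; vring.
  - right; right; right; right; rewrite extend_plane_orth; auto using on_S2_neq0, radial_half_space.
    + apply Horth; exists 1, 0; vring.
    + apply Horth; exists 0, 1; vring.
  - exfalso; specialize (Horth h I); apply on_S2_dot in Hh; lra.
Qed.

Lemma surface_of_classified (C S : R3 -> Prop) :
  classified_cone C -> surface_of C S -> spherical_shape S.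
Proof.
  intros HC [[Hns ->]|[Hs (h & Hh & Horth & ->)]].
  - apply radial_shape; auto.
  - apply radial_extend_shape; auto.
Qed.

(** ** Adding a generator *)

Definition convex_cone (C : R3 -> Prop) : Prop :=
  C zero3 /\ (forall v w, C v -> C w -> C (add3 v w)) /\ (forall a v, 0 <= a -> C v -> C (scal3 a v)).

Lemma subspace_convex_cone (C : R3 -> Prop) : lin_subspace C -> convex_cone C.
Proof. intros (H0 & Hadd & Hscal); repeat split; auto. Qed.

Lemma extend_mem (C : R3 -> Prop) (w : R3) : convex_cone C -> C w -> extend C w = C.
Proof.
  intros (H0 & Hadd & Hscal) Hw; apply set3_ext; intros v; split.
  - intros (c & a & Hc & Ha & ->); auto.
  - intros Hv; exists v, 0; repeat split; auto; [lra|vring].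
Qed.

Lemma ray_convex (q : R3) : convex_cone (ray q).
Proof.
  split; [exists 0; split; [lra|vring]|split].
  - intros v w (a & Ha & ->) (b & Hb & ->); exists (a + b); split; [lra|vring].
  - intros k v Hk (a & Ha & ->); exists (k * a); split; [nra|vring].
Qed.

Lemma sector_convex (q1 q2 : R3) : convex_cone (sector q1 q2).
Proof.
  split; [exists 0, 0; repeat split; [lra|lra|vring]|split].
  - intros v w (a & b & Ha & Hb & ->) (c & d & Hc & Hd & ->); exists (a + c), (b + d).
    repeat split; [lra|lra|vring].
  - intros k v Hk (a & b & Ha & Hb & ->); exists (k * a), (k * b); repeat split; [nra|nra|vring].
Qed.

Lemma half_plane_convex (p q : R3) : convex_cone (half_plane p q).
Proof.
  split; [exists 0, 0; split; [lra|vring]|split].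
  - intros v w (a & b & Hb & ->) (c & d & Hd & ->); exists (a + c), (b + d); split; [lra|vring].
  - intros k v Hk (a & b & Hb & ->); exists (k * a), (k * b); split; [nra|vring].
Qed.

Lemma wedge_convex (p q1 q2 : R3) : convex_cone (wedge p q1 q2).
Proof.
  split; [exists 0, 0, 0; repeat split; [lra|lra|vring]|split].
  - intros v w (c & a & b & Ha & Hb & ->) (c' & a' & b' & Ha' & Hb' & ->).
    exists (c + c'), (a + a'), (b + b'); repeat split; [lra|lra|vring].
  - intros k v Hk (c & a & b & Ha & Hb & ->); exists (k * c), (k * a), (k * b).
    repeat split; [nra|nra|vring].
Qed.

Lemma half_space_convex (n : R3) : convex_cone (half_space n).
Proof.
  unfold half_space; split; [vsimpl; lra|split].
  - intros v w Hv Hw; rewrite dot3_add_r; lra.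
  - intros a v Ha Hv; rewrite dot3_scal_r; nra.
Qed.

Lemma extend_ray (q w : R3) : extend (ray q) w = sector q w.
Proof.
  apply set3_ext; intros v; split.
  - intros (c & b & (a & Ha & ->) & Hb & ->); exists a, b; auto.
  - intros (a & b & Ha & Hb & ->); exists (scal3 a q), b; repeat split; auto; exists a; auto.
Qed.

Lemma extend_sector (q1 q2 w : R3) : extend (sector q1 q2) w = simplex q1 q2 w.
Proof.
  apply set3_ext; intros v; split.
  - intros (c' & c & (a & b & Ha & Hb & ->) & Hc & ->); exists a, b, c; repeat split; auto; vring.
  - intros (a & b & c & Ha & Hb & Hc & ->); exists (lc2 a q1 b q2), c; repeat split; auto; [|vring].
    exists a, b; auto.
Qed.

Lemma extend_half_plane (p q w : R3) : extend (half_plane p q) w = wedge p q w.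
Proof.
  apply set3_ext; intros v; split.
  - intros (c' & b' & (c & b & Hb & ->) & Hb' & ->); exists c, b, b'; repeat split; auto; vring.
  - intros (c & a & b & Ha & Hb & ->); exists (lc2 c p a q), b; repeat split; auto; [|vring].
    exists c, a; auto.
Qed.

Lemma sector_comm (q1 q2 : R3) : sector q1 q2 = sector q2 q1.
Proof.
  apply set3_ext; intros v; split; intros (a & b & Ha & Hb & ->); exists b, a; repeat split; auto; vring.
Qed.

Lemma wedge_comm (p q1 q2 : R3) : wedge p q1 q2 = wedge p q2 q1.
Proof.
  apply set3_ext; intros v; split; intros (c & a & b & Ha & Hb & ->); exists c, b, a;
    repeat split; auto; vring.
Qed.

Lemma shift_nonneg (x k : R) : k < 0 -> exists a, 0 <= a /\ 0 <= x - a * k.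
Proof.
  intros Hk; exists (Rabs x / - k); split; [apply Rle_mult_inv_pos; [apply Rabs_pos|lra]|].
  replace (Rabs x / - k * k) with (- Rabs x) by (field; lra).
  pose proof (Rle_abs (- x)); rewrite Rabs_Ropp in *; lra.
Qed.

Lemma shift_nonneg2 (x y k l : R) : k < 0 -> l < 0 ->
  exists a, 0 <= a /\ 0 <= x - a * k /\ 0 <= y - a * l.
Proof.
  intros Hk Hl; destruct (shift_nonneg x k Hk) as (a & Ha & Hx), (shift_nonneg y l Hl) as (b & Hb & Hy).
  exists (Rmax a b); pose proof (Rmax_l a b); pose proof (Rmax_r a b); repeat split; nra.
Qed.

Lemma extend_sector_plane (q1 q2 w : R3) al be : w = lc2 al q1 be q2 -> al < 0 -> be < 0 ->
  extend (sector q1 q2) w = plane q1 q2.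
Proof.
  intros -> Hal Hbe; apply set3_ext; intros v; split.
  - intros (c & a & (x & y & Hx & Hy & ->) & Ha & ->); exists (x + a * al), (y + a * be); vring.
  - intros (x & y & ->); destruct (shift_nonneg2 x y al be Hal Hbe) as (a & Ha & Hx & Hy).
    exists (lc2 (x - a * al) q1 (y - a * be) q2), a; repeat split; auto; [|vring].
    exists (x - a * al), (y - a * be); auto.
Qed.

(* Writing [q2] back in terms of [q1] and [w] shows that [w] replaces [q2] as an edge. *)
Lemma extend_sector_rotate (q1 q2 w : R3) al be : w = lc2 al q1 be q2 -> al < 0 -> 0 < be ->
  extend (sector q1 q2) w = sector q1 w.
Proof.
  intros -> Hal Hbe; apply set3_ext; intros v; split.
  - intros (c & a & (x & y & Hx & Hy & ->) & Ha & ->).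
    exists (x - y * al / be), (a + y / be); repeat split.
    + assert (0 <= y * - al / be) by (apply Rle_mult_inv_pos; nra); unfold Rdiv in *; nra.
    + assert (0 <= y / be) by (apply Rle_mult_inv_pos; lra); lra.
    + apply vec3_ext; vsimpl; field; lra.
  - intros (x & y & Hx & Hy & ->); exists (lc2 x q1 0 q2), y; repeat split; auto; [|vring].
    exists x, 0; repeat split; auto; lra.
Qed.

Lemma extend_sector_classified (q1 q2 w : R3) : on_S2 q1 -> on_S2 q2 -> on_S2 w ->
  cross3 q1 q2 <> zero3 -> w <> opp3 q1 -> w <> opp3 q2 -> classified_cone (extend (sector q1 q2) w).
Proof.
  intros H1 H2 Hw Hc N1 N2; pose proof (det3_cross_neq0 q1 q2 Hc) as Hd.
  destruct (lc3_coords q1 q2 (cross3 q1 q2) w Hd) as (al & be & ga & Ew).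
  destruct (Req_dec ga 0) as [->|Hga].
  2: { rewrite extend_sector; apply classified_simplex; auto.
       rewrite Ew, det3_lc3_3; apply Rmult_integral_contrapositive_currified; auto. }
  assert (Ew' : w = lc2 al q1 be q2) by (rewrite Ew; vring); clear Ew.
  assert (Hc' : cross3 q2 q1 <> zero3)
    by (intros E; apply Hc; apply vec3_coords in E; apply vec3_ext; vsimpl; lra).
  destruct (Rle_or_lt 0 al) as [Hal|Hal], (Rle_or_lt 0 be) as [Hbe|Hbe].
  - rewrite extend_mem; [apply classified_sector; auto|apply sector_convex|exists al, be; auto].
  - destruct (Req_dec al 0) as [->|Hal'].
    + exfalso; apply N2, (unit_neg_multiple q2 w be); auto; rewrite Ew'; vring.
    + rewrite sector_comm, (extend_sector_rotate q2 q1 w be al); [|rewrite Ew'; vring|auto|lra].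
      apply classified_sector; auto; replace w with (lc2 be q2 al q1) by (rewrite Ew'; vring).
      rewrite cross3_lc2_l; apply scal3_neq0; auto.
  - destruct (Req_dec be 0) as [->|Hbe'].
    + exfalso; apply N1, (unit_neg_multiple q1 w al); auto; rewrite Ew'; vring.
    + rewrite (extend_sector_rotate q1 q2 w al be); auto; [|lra].
      apply classified_sector; auto; rewrite Ew', cross3_lc2_l; apply scal3_neq0; auto; lra.
  - rewrite (extend_sector_plane q1 q2 w al be); auto.
    apply classified_nonpointed, nonpointed_plane; auto.
Qed.

Lemma extend_ray_classified (q w : R3) : on_S2 q -> on_S2 w -> w <> opp3 q ->
  classified_cone (extend (ray q) w).
Proof.
  intros Hq Hw N; destruct (classic (cross3 q w = zero3)) as [Hc|Hc].
  - destruct (cross3_parallel_units q w Hq Hw Hc) as [->|]; [|contradiction].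
    rewrite extend_mem; [apply classified_ray; auto|apply ray_convex|exists 1; split; [lra|vring]].
  - rewrite extend_ray; apply classified_sector; auto.
Qed.

Lemma extend_line_nonpointed (p w : R3) : on_S2 p -> on_S2 w -> nonpointed_cone (extend (line p) w).
Proof.
  intros Hp Hw; destruct (classic (cross3 p w = zero3)) as [Hc|Hc].
  - rewrite extend_mem; [apply nonpointed_line, Hp|apply subspace_convex_cone, line_subspace|].
    destruct (cross3_parallel_units p w Hp Hw Hc) as [->| ->]; [exists 1|exists (-1)]; vring.
  - rewrite extend_line; apply nonpointed_half_plane; auto.
Qed.

Lemma extend_half_plane_plane (p q w : R3) al be : w = lc2 al p be q -> be < 0 ->
  extend (half_plane p q) w = plane p q.
Proof.
  intros -> Hbe; apply set3_ext; intros v; split.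
  - intros (c & a & (x & y & Hy & ->) & Ha & ->); exists (x + a * al), (y + a * be); vring.
  - intros (x & y & ->); destruct (shift_nonneg y be Hbe) as (a & Ha & Hy).
    exists (lc2 (x - a * al) p (y - a * be) q), a; repeat split; auto; [|vring].
    exists (x - a * al), (y - a * be); auto.
Qed.

Lemma extend_half_plane_nonpointed (p q w : R3) : on_S2 p -> on_S2 q -> on_S2 w ->
  cross3 p q <> zero3 -> nonpointed_cone (extend (half_plane p q) w).
Proof.
  intros Hp Hq Hw Hc; pose proof (det3_cross_neq0 p q Hc) as Hd.
  destruct (lc3_coords p q (cross3 p q) w Hd) as (al & be & ga & Ew).
  destruct (Req_dec ga 0) as [->|Hga].
  2: { rewrite extend_half_plane; apply nonpointed_wedge; auto.
       rewrite Ew, det3_lc3_3; apply Rmult_integral_contrapositive_currified; auto. }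
  assert (Ew' : w = lc2 al p be q) by (rewrite Ew; vring); clear Ew.
  destruct (Rle_or_lt 0 be) as [Hbe|Hbe].
  - rewrite extend_mem; [apply nonpointed_half_plane; auto|apply half_plane_convex|exists al, be; auto].
  - rewrite (extend_half_plane_plane p q w al be); auto; apply nonpointed_plane, Hc.
Qed.

Lemma extend_wedge_whole (p q1 q2 w : R3) al be ga : det3 p q1 q2 <> 0 ->
  w = lc3 al p be q1 ga q2 -> be < 0 -> ga < 0 -> extend (wedge p q1 q2) w = whole_space.
Proof.
  intros Hd -> Hbe Hga; apply set3_ext; intros v; split; [intros; exact I|intros _].
  destruct (lc3_coords p q1 q2 v Hd) as (c & x & y & ->).
  destruct (shift_nonneg2 x y be ga Hbe Hga) as (a & Ha & Hx & Hy).
  exists (lc3 (c - a * al) p (x - a * be) q1 (y - a * ga) q2), a; repeat split; auto; [|vring].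
  exists (c - a * al), (x - a * be), (y - a * ga); auto.
Qed.

(* The normal [det3 p q2 q1 * (p x q2)] of the plane spanned by [p] and [q2] points towards [q1]. *)
Lemma extend_wedge_half_space (p q1 q2 w : R3) al ga : det3 p q1 q2 <> 0 ->
  w = lc3 al p 0 q1 ga q2 -> ga < 0 ->
  extend (wedge p q1 q2) w = half_space (scal3 (det3 p q2 q1) (cross3 p q2)).
Proof.
  intros Hd -> Hga; set (d := det3 p q2 q1).
  assert (Hdd : 0 < d * d)
    by (unfold d; rewrite det3_swap23; pose proof (Rsqr_pos_lt _ Hd); unfold Rsqr in *; nra).
  assert (F : forall c x y, dot3 (scal3 d (cross3 p q2)) (lc3 c p x q1 y q2) = x * (d * d))
    by (intros; unfold d; vsimpl; ring).
  apply set3_ext; intros v; unfold half_space; split.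
  - intros (c' & a & (c & x & y & Hx & Hy & ->) & Ha & ->).
    replace (add3 (lc3 c p x q1 y q2) (scal3 a (lc3 al p 0 q1 ga q2)))
      with (lc3 (c + a * al) p x q1 (y + a * ga) q2) by vring.
    rewrite F; nra.
  - intros Hv; destruct (lc3_coords p q1 q2 v Hd) as (c & x & y & ->).
    rewrite F in Hv; destruct (shift_nonneg y ga Hga) as (a & Ha & Hy).
    exists (lc3 (c - a * al) p x q1 (y - a * ga) q2), a; repeat split; auto; [|vring].
    exists (c - a * al), x, (y - a * ga); repeat split; auto; nra.
Qed.

(* Writing [q1] back in terms of [p], [w] and [q2] shows that [w] replaces [q1] as an edge. *)
Lemma extend_wedge_rotate (p q1 q2 w : R3) al be ga : w = lc3 al p be q1 ga q2 -> 0 < be -> ga < 0 ->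
  extend (wedge p q1 q2) w = wedge p w q2.
Proof.
  intros -> Hbe Hga; apply set3_ext; intros v; split.
  - intros (c' & a & (c & x & y & Hx & Hy & ->) & Ha & ->).
    exists (c - x * al / be), (a + x / be), (y - x * ga / be); repeat split.
    + assert (0 <= x / be) by (apply Rle_mult_inv_pos; lra); lra.
    + assert (0 <= x * - ga / be) by (apply Rle_mult_inv_pos; nra); unfold Rdiv in *; nra.
    + apply vec3_ext; vsimpl; field; lra.
  - intros (c & x & y & Hx & Hy & ->); exists (lc3 c p 0 q1 y q2), x; repeat split; auto; [|vring].
    exists c, 0, y; repeat split; auto; lra.
Qed.

Lemma extend_wedge_neg (p q1 q2 w : R3) al be ga : on_S2 p -> on_S2 q1 -> on_S2 q2 -> on_S2 w ->
  det3 p q1 q2 <> 0 -> w = lc3 al p be q1 ga q2 -> ga < 0 -> nonpointed_cone (extend (wedge p q1 q2) w).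
Proof.
  intros Hp H1 H2 Hw Hd Ew Hga; destruct (Rtotal_order be 0) as [Hbe|[->|Hbe]].
  - rewrite (extend_wedge_whole p q1 q2 w al be ga); auto; apply nonpointed_whole.
  - rewrite (extend_wedge_half_space p q1 q2 w al ga); auto; apply nonpointed_half_space.
    assert (Hd' : det3 p q2 q1 <> 0) by (rewrite det3_swap23; lra).
    apply scal3_neq0; auto; intros E; apply Hd'; rewrite det3_cross, E; vsimpl; ring.
  - rewrite (extend_wedge_rotate p q1 q2 w al be ga); auto; apply nonpointed_wedge; auto.
    rewrite Ew, det3_lc3_2; apply Rmult_integral_contrapositive_currified; auto; lra.
Qed.

Lemma extend_wedge_nonpointed (p q1 q2 w : R3) : on_S2 p -> on_S2 q1 -> on_S2 q2 -> on_S2 w ->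
  det3 p q1 q2 <> 0 -> nonpointed_cone (extend (wedge p q1 q2) w).
Proof.
  intros Hp H1 H2 Hw Hd; destruct (lc3_coords p q1 q2 w Hd) as (al & be & ga & Ew).
  destruct (Rlt_or_le ga 0) as [Hga|Hga]; [apply (extend_wedge_neg p q1 q2 w al be ga); auto|].
  destruct (Rlt_or_le be 0) as [Hbe|Hbe].
  - rewrite wedge_comm; apply (extend_wedge_neg p q2 q1 w al ga be); auto.
    + rewrite det3_swap23; lra.
    + rewrite Ew; vring.
  - rewrite extend_mem; [apply nonpointed_wedge; auto|apply wedge_convex|exists al, be, ga; auto].
Qed.

Lemma extend_half_space_nonpointed (n w : R3) : n <> zero3 -> nonpointed_cone (extend (half_space n) w).
Proof.
  intros Hn; destruct (Rle_or_lt 0 (dot3 n w)) as [Hw|Hw].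
  - rewrite extend_mem; [apply nonpointed_half_space, Hn|apply half_space_convex|exact Hw].
  - replace (extend (half_space n) w) with whole_space; [apply nonpointed_whole|].
    apply set3_ext; intros v; split; [intros _|intros; exact I].
    destruct (shift_nonneg (dot3 n v) (dot3 n w) Hw) as (a & Ha & Hv).
    exists (add3 v (scal3 (- a) w)), a; repeat split; auto; [|vring].
    unfold half_space; rewrite dot3_add_r, dot3_scal_r; lra.
Qed.

Lemma extend_plane_half_space (p q w : R3) : cross3 p q <> zero3 -> dot3 (cross3 p q) w <> 0 ->
  extend (plane p q) w = half_space (scal3 (dot3 (cross3 p q) w) (cross3 p q)).
Proof.
  intros Hc Hk; set (r := cross3 p q) in *; set (k := dot3 r w) in *.
  assert (Hp : dot3 r p = 0) by (unfold r; vsimpl; ring).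
  assert (Hq : dot3 r q = 0) by (unfold r; vsimpl; ring).
  apply set3_ext; intros v; unfold half_space; rewrite dot3_scal_l; split.
  - intros (c & a & (x & y & ->) & Ha & ->); unfold lc2.
    rewrite !dot3_add_r, !dot3_scal_r, Hp, Hq; fold k; nra.
  - intros Hv; exists (add3 v (scal3 (- (dot3 r v / k)) w)), (dot3 r v / k); repeat split; [| |vring].
    + apply plane_of_orth with r; auto.
      rewrite dot3_add_r, dot3_scal_r; fold k; field; auto.
    + replace (dot3 r v / k) with (k * dot3 r v / (k * k)) by (field; auto).
      apply Rle_mult_inv_pos; auto; pose proof (Rsqr_pos_lt _ Hk); unfold Rsqr in *; lra.
Qed.

Lemma extend_plane_nonpointed (p q w : R3) :
  cross3 p q <> zero3 -> nonpointed_cone (extend (plane p q) w).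
Proof.
  intros Hc; destruct (Req_dec (dot3 (cross3 p q) w) 0) as [Hk|Hk].
  - rewrite extend_mem; [apply nonpointed_plane, Hc|apply subspace_convex_cone, plane_subspace|].
    apply plane_of_orth with (cross3 p q); auto; vsimpl; ring.
  - rewrite extend_plane_half_space by auto; apply nonpointed_half_space, scal3_neq0; auto.
Qed.

Lemma extend_nonpointed (C : R3 -> Prop) (w : R3) :
  nonpointed_cone C -> on_S2 w -> nonpointed_cone (extend C w).
Proof.
  intros [p Hp|p q Hp Hq Hc|p q1 q2 Hp H1 H2 Hd|n Hn|p q Hc|] Hw.
  - apply extend_line_nonpointed; auto.
  - apply extend_half_plane_nonpointed; auto.
  - apply extend_wedge_nonpointed; auto.
  - apply extend_half_space_nonpointed; auto.
  - apply extend_plane_nonpointed; auto.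
  - rewrite extend_mem; [apply nonpointed_whole| |exact I].
    apply subspace_convex_cone, whole_space_subspace.
Qed.

Lemma cone_eq_cone_list (W : R3 -> Prop) (L : list R3) :
  (forall w, W w <-> In w L) -> cone W = cone_list L.
Proof. intros H; unfold cone_list; f_equal; apply set3_ext, H. Qed.

Lemma cone_list_antipodal (p : R3) : cone_list [p; opp3 p] = line p.
Proof.
  rewrite !cone_list_cons, cone_list_nil, extend_zero_cone, extend_ray.
  apply set3_ext; intros v; split.
  - intros (a & b & Ha & Hb & ->); exists (b - a); vring.
  - intros (c & ->); destruct (Rle_or_lt 0 c).
    + exists 0, c; repeat split; auto; [lra|vring].
    + exists (- c), 0; repeat split; [lra|lra|vring].
Qed.

Lemma nonpointed_cone_antipodal (L : list R3) (p : R3) : Forall on_S2 L -> on_S2 p ->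
  In p L -> In (opp3 p) L -> nonpointed_cone (cone_list L).
Proof.
  intros HL Hp Hin Hin'.
  replace (cone_list L) with (cone_list (L ++ [p; opp3 p])).
  2: { symmetry; apply cone_eq_cone_list; intros w.
       rewrite in_app_iff; simpl; intuition congruence. }
  clear Hin Hin'; induction HL as [|w L Hw HL IH]; simpl.
  - rewrite cone_list_antipodal; apply nonpointed_line, Hp.
  - rewrite cone_list_cons; apply extend_nonpointed; auto.
Qed.

Lemma classified_cone_three (a b c : R3) : on_S2 a -> on_S2 b -> on_S2 c ->
  classified_cone (cone_list [a; b; c]).
Proof.
  intros Ha Hb Hc; assert (HL : Forall on_S2 [a; b; c]) by auto.
  destruct (classic (b = opp3 c)) as [E|Nbc].
  { apply classified_nonpointed, (nonpointed_cone_antipodal _ c); simpl; auto. }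
  destruct (classic (a = opp3 b)) as [E|Nab].
  { apply classified_nonpointed, (nonpointed_cone_antipodal _ b); simpl; auto. }
  destruct (classic (a = opp3 c)) as [E|Nac].
  { apply classified_nonpointed, (nonpointed_cone_antipodal _ c); simpl; auto. }
  rewrite !cone_list_cons, cone_list_nil, extend_zero_cone.
  destruct (classic (b = c)) as [->|Nbc'].
  - rewrite (extend_mem (ray c) c); [apply extend_ray_classified; auto|apply ray_convex|].
    exists 1; split; [lra|vring].
  - rewrite extend_ray; apply extend_sector_classified; auto using units_cross3_neq0.
Qed.

(** ** The triangular lattice *)

Definition sqdist2 (p q : R2) : R := (fst p - fst q) ^ 2 + (snd p - snd q) ^ 2.

Lemma dist2_sqdist2 (p q : R2) : dist2 p q * dist2 p q = sqdist2 p q.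
Proof. apply sqrt_sqrt, Rplus_le_le_0_compat; apply pow2_ge_0. Qed.

Definition lattice_point (eps : R) (a b : Z) : R2 :=
  scal2 eps (add2 (scal2 (IZR a) e1) (scal2 (IZR b) e2hat)).

Lemma lattice_point_coords eps a b :
  lattice_point eps a b = (eps * (IZR a + IZR b / 2), eps * IZR b * (sqrt 3 / 2)).
Proof. unfold lattice_point, scal2, add2, e1, e2hat; simpl; f_equal; field. Qed.

(* [|a e1 + b e2hat|^2 = a^2 + a b + b^2], a positive definite integral form *)
Lemma lattice_separated (eps : R) (x y : R2) : in_lattice eps x -> in_lattice eps y -> x <> y ->
  eps * eps <= sqdist2 x y.
Proof.
  intros [a1 [b1 ->]] [a2 [b2 ->]] Hne; fold (lattice_point eps a1 b1) (lattice_point eps a2 b2) in *.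
  assert (Hmn : (a1 - a2 <> 0 \/ b1 - b2 <> 0)%Z).
  { apply NNPP; intros H; apply Hne; f_equal; lia. }
  assert (Hq : (1 <= (a1 - a2) * (a1 - a2) + (a1 - a2) * (b1 - b2) + (b1 - b2) * (b1 - b2))%Z).
  { generalize (a1 - a2)%Z (b1 - b2)%Z Hmn; intros m n H; nia. }
  apply IZR_le in Hq; rewrite !plus_IZR, !mult_IZR, !minus_IZR in Hq.
  pose proof (sqrt_sqrt 3 ltac:(lra)) as S3.
  unfold sqdist2; rewrite !lattice_point_coords; cbn [fst snd].
  replace ((eps * (IZR a1 + IZR b1 / 2) - eps * (IZR a2 + IZR b2 / 2)) ^ 2
           + (eps * IZR b1 * (sqrt 3 / 2) - eps * IZR b2 * (sqrt 3 / 2)) ^ 2)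
    with (eps * eps * ((IZR a1 - IZR a2) * (IZR a1 - IZR a2) + (IZR a1 - IZR a2) * (IZR b1 - IZR b2)
          + (IZR b1 - IZR b2) * (IZR b1 - IZR b2) / 4 * (1 + sqrt 3 * sqrt 3))) by field.
  rewrite S3; assert (0 <= eps * eps) by nra; nra.
Qed.

Lemma triangle_heavy_vertex_close (a b c : R2) al be ga e :
  0 <= be -> 0 <= ga -> al + be + ga = 1 -> 1 / 3 <= al -> 0 < e ->
  sqdist2 a b = e * e -> sqdist2 b c = e * e -> sqdist2 a c = e * e ->
  sqdist2 (add2 (scal2 al a) (add2 (scal2 be b) (scal2 ga c))) a < e * e.
Proof.
  destruct a as [a1 a2], b as [b1 b2], c as [c1 c2]; unfold sqdist2, add2, scal2; cbn [fst snd].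
  intros Hb Hg Hs Hal He Hab Hbc Hac; replace al with (1 - be - ga) by lra.
  match goal with |- ?L < _ =>
    replace L with (be * be * ((a1 - b1) ^ 2 + (a2 - b2) ^ 2) + ga * ga * ((a1 - c1) ^ 2 + (a2 - c2) ^ 2)
       + be * ga * (((a1 - b1) ^ 2 + (a2 - b2) ^ 2) + ((a1 - c1) ^ 2 + (a2 - c2) ^ 2)
                    - ((b1 - c1) ^ 2 + (b2 - c2) ^ 2))) by ring end.
  rewrite Hab, Hbc, Hac; assert (be * be + be * ga + ga * ga < 1) by nra.
  assert (0 < (1 - (be * be + be * ga + ga * ga)) * (e * e)) by (apply Rmult_lt_0_compat; nra); nra.
Qed.

(* Some barycentric weight of [x] is at least [1/3], which puts [x] closer than [eps] to that vertex. *)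
Lemma lattice_triangle_vertices (eps : R) (a b c x : R2) : 0 < eps ->
  dist2 a b = eps -> dist2 b c = eps -> dist2 a c = eps ->
  in_lattice eps a -> in_lattice eps b -> in_lattice eps c -> in_lattice eps x -> conv3 a b c x ->
  x = a \/ x = b \/ x = c.
Proof.
  intros He Dab Dbc Dac La Lb Lc Lx (al & be & ga & Ha & Hb & Hg & Hs & Ex).
  assert (Sym : forall p q, sqdist2 p q = sqdist2 q p) by (intros; unfold sqdist2; ring).
  assert (Sab : sqdist2 a b = eps * eps) by (rewrite <- dist2_sqdist2, Dab; auto).
  assert (Sbc : sqdist2 b c = eps * eps) by (rewrite <- dist2_sqdist2, Dbc; auto).
  assert (Sac : sqdist2 a c = eps * eps) by (rewrite <- dist2_sqdist2, Dac; auto).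
  assert (Close : forall v, in_lattice eps v -> sqdist2 x v < eps * eps -> x = v).
  { intros v Lv H; apply NNPP; intros Hne; pose proof (lattice_separated eps x v Lx Lv Hne); lra. }
  destruct (Rle_or_lt (1 / 3) al); [|destruct (Rle_or_lt (1 / 3) be)].
  - left; apply Close; auto; rewrite Ex; apply (triangle_heavy_vertex_close a b c); auto.
  - right; left; apply Close; auto.
    replace x with (add2 (scal2 be b) (add2 (scal2 al a) (scal2 ga c)))
      by (rewrite Ex; destruct a, b, c; unfold add2, scal2; simpl; f_equal; ring).
    apply (triangle_heavy_vertex_close b a c); auto; try lra; rewrite Sym; auto.
  - right; right; apply Close; auto.
    replace x with (add2 (scal2 ga c) (add2 (scal2 al a) (scal2 be b)))
      by (rewrite Ex; destruct a, b, c; unfold add2, scal2; simpl; f_equal; ring).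
    apply (triangle_heavy_vertex_close c a b); auto; try lra; rewrite Sym; auto.
Qed.

Lemma Rabs_le_between (x a : R) : Rabs x <= a -> - a <= x <= a.
Proof. intros H; pose proof (Rle_abs x); pose proof (Rle_abs (- x)); rewrite Rabs_Ropp in *; lra. Qed.

Lemma dist2_comm (p q : R2) : dist2 p q = dist2 q p.
Proof. unfold dist2; f_equal; ring. Qed.

Lemma coord_le_dist2 (p q : R2) : Rabs (fst p - fst q) <= dist2 p q /\ Rabs (snd p - snd q) <= dist2 p q.
Proof.
  pose proof (pow2_ge_0 (fst p - fst q)); pose proof (pow2_ge_0 (snd p - snd q)).
  unfold dist2; split; rewrite <- sqrt_Rsqr_abs; apply sqrt_le_1_alt; unfold Rsqr; simpl in *; lra.
Qed.

Lemma triangle_near_vertex (eps : R) (T : R2 -> Prop) : in_T eps T ->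
  exists a, forall y, T y -> Rabs (fst y - fst a) <= eps /\ Rabs (snd y - snd a) <= eps.
Proof.
  intros (a & b & c & _ & _ & _ & Dab & _ & Dac & HT); exists a; intros y Hy.
  apply HT in Hy; destruct Hy as (al & be & ga & Ha & Hb & Hg & Hs & ->).
  rewrite dist2_comm in Dab, Dac.
  destruct (coord_le_dist2 b a) as [B1 B2], (coord_le_dist2 c a) as [C1 C2]; rewrite Dab in B1, B2;
    rewrite Dac in C1, C2; apply Rabs_le_between in B1, B2, C1, C2.
  unfold add2, scal2; cbn [fst snd]; replace al with (1 - be - ga) by lra; split; apply Rabs_le; nra.
Qed.

Definition zrange (N : Z) : list Z := map (fun k => Z.of_nat k - N)%Z (seq 0 (Z.to_nat (2 * N))).

Lemma in_zrange (N a : Z) : (- N < a < N)%Z -> In a (zrange N).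
Proof.
  intros H; apply in_map_iff; exists (Z.to_nat (a + N)); split; [lia|apply in_seq; lia].
Qed.

Lemma lattice_box_finite (eps K : R) : 0 < eps -> exists l, forall x, in_lattice eps x ->
  Rabs (fst x) <= K -> Rabs (snd x) <= K -> In x l.
Proof.
  intros He; destruct (archimed (2 * K / eps)) as [HN _]; set (N := up (2 * K / eps)) in *.
  assert (HN' : 2 * K < eps * IZR N) by (apply Rmult_gt_compat_l with (r := eps) in HN; auto;
    replace (eps * (2 * K / eps)) with (2 * K) in HN by (field; lra); lra).
  assert (Hz : forall z : Z, - (2 * K) <= eps * IZR z <= 2 * K -> In z (zrange N)).
  { intros z Hz; apply in_zrange; split; apply lt_IZR; [rewrite opp_IZR|]; nra. }
  exists (flat_map (fun a => map (lattice_point eps a) (zrange N)) (zrange N)).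
  intros x [a [b ->]] H1 H2; fold (lattice_point eps a b) in *.
  rewrite lattice_point_coords in H1, H2; cbn [fst snd] in H1, H2.
  apply Rabs_le_between in H1, H2.
  assert (S3 : 1 <= sqrt 3) by (rewrite <- sqrt_1; apply sqrt_le_1_alt; lra).
  assert (Hb : - (2 * K) <= eps * IZR b <= 2 * K) by (split; nra).
  apply in_flat_map; exists a; split; [apply Hz; lra|apply in_map, Hz, Hb].
Qed.

Lemma finite_of_subset_list (P : R3 -> Prop) (L0 : list R3) :
  (forall w, P w -> In w L0) -> exists L, forall w, P w <-> In w L.
Proof.
  intros H; induction L0 as [|x L0 IH] in P, H |- *.
  - exists []; intros w; split; [apply H|intros []].
  - destruct (IH (fun w => P w /\ w <> x)) as [L HL].
    { intros w [Hw Hne]; destruct (H w Hw); [congruence|auto]. }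
    destruct (classic (P x)); [exists (x :: L)|exists L]; intros w; simpl; rewrite <- HL;
      destruct (classic (w = x)) as [->|]; intuition congruence.
Qed.

Lemma segm_endpoints (i j : R2) : segm i j i /\ segm i j j.
Proof.
  destruct i, j; split; [exists 0|exists 1]; (split; [lra|unfold add2, scal2; simpl; f_equal; ring]).
Qed.

Lemma conv3_vertices (a b c : R2) : conv3 a b c a /\ conv3 a b c b /\ conv3 a b c c.
Proof.
  destruct a, b, c; split; [|split]; [exists 1, 0, 0|exists 0, 1, 0|exists 0, 0, 1];
    (repeat split; try lra; unfold add2, scal2; simpl; f_equal; ring).
Qed.

(** ** Regions *)

Section Region.

Variables (eps : R) (Omega : R2 -> Prop) (u : R2 -> R3) (Reg : R2 -> Prop).
Variable F : (R2 -> Prop) -> Prop.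
Hypothesis eps_pos : 0 < eps.
Hypothesis u_SF : SF eps Omega u.
Hypothesis F_triangles : forall T, F T -> in_T eps T.
Hypothesis F_connected : forall T T', F T -> F T' -> connected_tri eps u T T'.
Hypothesis Reg_union : forall x, Reg x <-> exists T, F T /\ T x.

Lemma values_on_S2 (w : R3) : values eps u Reg w -> on_S2 w.
Proof. intros (i & Li & _ & <-); apply (proj1 u_SF), Li. Qed.

Lemma vertex_in_region (T : R2 -> Prop) (x : R2) : F T -> T x -> Reg x.
Proof. intros; apply Reg_union; eauto. Qed.

Lemma family_neighbour (T T' : R2 -> Prop) :
  F T -> F T' -> T <> T' -> exists T'', neighbours eps u T T''.
Proof.
  intros FT FT' Hne; pose proof (F_connected T T' FT FT') as C.
  apply clos_rt_rt1n in C; inversion C; subst; [contradiction|eauto].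
Qed.

(* Outside [Omega] all spins are the north pole, so an edge of [N_eps(u)] has an endpoint in [Omega]. *)
Lemma neighbour_antipodal_edge (T T' : R2 -> Prop) : neighbours eps u T T' ->
  exists i j, in_lattice eps i /\ in_lattice eps j /\ T i /\ T j /\ u i = opp3 (u j) /\
    (Omega i \/ Omega j).
Proof.
  intros (_ & _ & i & j & Li & Lj & _ & Eu & Hs); exists i, j.
  assert (Ti : T i /\ T' i) by apply Hs, segm_endpoints.
  assert (Tj : T j /\ T' j) by apply Hs, segm_endpoints.
  repeat split; try tauto; apply NNPP; intros HO.
  rewrite (proj2 u_SF i Li), (proj2 u_SF j Lj) in Eu by tauto.
  apply (on_S2_neq_opp npole); auto; apply on_S2_dot; vsimpl; lra.
Qed.

Lemma region_bounded : bounded2 Omega -> (exists T1 T2, F T1 /\ F T2 /\ T1 <> T2) ->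
  exists K, forall x, Reg x -> Rabs (fst x) <= K /\ Rabs (snd x) <= K.
Proof.
  intros [M HM] (T1 & T2 & F1 & F2 & Hne); exists (2 * eps + M); intros x Rx.
  apply Reg_union in Rx; destruct Rx as (T & FT & Tx).
  assert (HT' : exists T', F T' /\ T <> T') by (destruct (classic (T = T1)) as [->|]; eauto).
  destruct HT' as (T' & FT' & HTT'); destruct (family_neighbour T T' FT FT' HTT') as [T'' HN].
  assert (Hz : exists z, T z /\ Omega z).
  { destruct (neighbour_antipodal_edge T T'' HN) as (i & j & _ & _ & Ti & Tj & _ & [Oi|Oj]); eauto. }
  destruct Hz as (z & Tz & Oz); destruct (triangle_near_vertex eps T (F_triangles T FT)) as [a Ha].
  destruct (Ha x Tx) as [X1 X2], (Ha z Tz) as [Z1 Z2].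
  destruct (coord_le_dist2 z (0, 0)) as [O1 O2]; simpl in O1, O2; rewrite !Rminus_0_r in O1, O2.
  specialize (HM z Oz); apply Rabs_le_between in X1, X2, Z1, Z2, O1, O2; split; apply Rabs_le; lra.
Qed.

Lemma values_finite : bounded2 Omega -> (exists T1 T2, F T1 /\ F T2 /\ T1 <> T2) ->
  exists L, forall w, values eps u Reg w <-> In w L.
Proof.
  intros HO Hmany; destruct (region_bounded HO Hmany) as [K HK].
  destruct (lattice_box_finite eps K eps_pos) as [l Hl].
  apply finite_of_subset_list with (map u l).
  intros w (i & Li & Ri & <-); apply in_map; destruct (HK i Ri); auto.
Qed.

Lemma cone_many_triangles : bounded2 Omega -> (exists T1 T2, F T1 /\ F T2 /\ T1 <> T2) ->
  nonpointed_cone (cone (values eps u Reg)).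
Proof.
  intros HO Hmany; destruct (values_finite HO Hmany) as [L HL]; rewrite (cone_eq_cone_list _ L HL).
  destruct Hmany as (T1 & T2 & F1 & F2 & Hne); destruct (family_neighbour T1 T2 F1 F2 Hne) as [T' HN].
  destruct (neighbour_antipodal_edge T1 T' HN) as (i & j & Li & Lj & Ti & Tj & Eu & _).
  apply (nonpointed_cone_antipodal L (u j)).
  - apply Forall_forall; intros w Hw; apply values_on_S2, HL, Hw.
  - apply (proj1 u_SF), Lj.
  - apply HL; exists j; eauto using vertex_in_region.
  - apply HL; exists i; eauto using vertex_in_region.
Qed.

Lemma cone_one_triangle (T0 : R2 -> Prop) : F T0 -> (forall T, F T -> T = T0) ->
  classified_cone (cone (values eps u Reg)).
Proof.
  intros F0 Huniq; destruct (F_triangles T0 F0) as (a & b & c & La & Lb & Lc & Dab & Dbc & Dac & HT).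
  destruct (conv3_vertices a b c) as (Va & Vb & Vc); apply HT in Va, Vb, Vc.
  rewrite (cone_eq_cone_list _ [u a; u b; u c]).
  - apply classified_cone_three; apply (proj1 u_SF); auto.
  - intros w; split.
    + intros (i & Li & Ri & <-); apply Reg_union in Ri; destruct Ri as (T & FT & Ti).
      rewrite (Huniq T FT) in Ti; apply HT in Ti.
      destruct (lattice_triangle_vertices eps a b c i) as [->|[->| ->]]; simpl; auto.
    + simpl; intros [<-|[<-|[<-|[]]]]; [exists a|exists b|exists c]; eauto using vertex_in_region.
Qed.

Lemma cone_no_triangle : ~ (exists T, F T) -> cone (values eps u Reg) = zero_cone.
Proof.
  intros Hnone; rewrite <- cone_list_nil; apply cone_eq_cone_list; intros w; split; [|intros []].
  intros (i & _ & Ri & _); apply Reg_union in Ri; destruct Ri as (T & FT & _); apply Hnone; eauto.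
Qed.

Lemma region_cone_classified : bounded2 Omega -> classified_cone (cone (values eps u Reg)).
Proof.
  intros HO; destruct (classic (exists T1 T2, F T1 /\ F T2 /\ T1 <> T2)) as [Hmany|Hone].
  - apply classified_nonpointed, cone_many_triangles; auto.
  - destruct (classic (exists T, F T)) as [[T0 F0]|Hnone].
    + apply (cone_one_triangle T0 F0); intros T FT; apply NNPP; intros Hne; apply Hone; eauto.
    + rewrite cone_no_triangle by auto; apply classified_zero.
Qed.

End Region.

Theorem lemma5p6 (eps : R) (Omega : R2 -> Prop) (u : R2 -> R3)
  (Reg : R2 -> Prop) (S : R3 -> Prop) :
  0 < eps -> bounded2 Omega -> open2 Omega -> SF eps Omega u ->
  is_region eps u Reg -> admissible_surface eps u Reg S ->
  semi_great_circle S \/ geodesic_arc S \/ geodesic_triangle S \/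
  two_adjacent_triangles S \/ hemisphere S.
Proof.
  intros He HO _ Hu [(F & HF & Hconn & HReg) _] Hadm.
  apply (surface_of_classified (cone (values eps u Reg))).
  - apply (region_cone_classified eps Omega u Reg F); auto.
  - apply admissible_surface_of, Hadm.
Qed.
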